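(* Let $(X,d,\mu)$ be a complete metric measure space with $\mu$ a doubling Borel regular measure, let $\Omega\subset X$ be a bounded domain, let $0<s<1$, and let $F\subset X$ be a measurable set with $F\setminus\Omega\neq\emptyset$. If $\mathcal{A}(F)\ne\emptyset$, then there exists a minimizer of $\mathcal{J}^s_\Omega$.
   Context: $\mu$ is doubling if there is $C_\mu\ge1$ with $0<\mu(B(x,2r))\le C_\mu\mu(B(x,r))<\infty$ for all $x,r$. A domain is a connected open set. Let $K_s(x,y)=\frac{2}{d(x,y)^s[\mu(B(x,d(x,y)))+\mu(B(y,d(x,y)))]}$, $L_s(A,B)=\int_A\int_BK_s(x,y)\,d\mu(y)\,d\mu(x)$, and $\mathcal{J}^s_\Omega(E)=L_s(E\cap\Omega,X\setminus E)+L_s(E\setminus\Omega,\Omega\setminus E)$. Let $\mathcal{A}(F)=\{E\subset X\text{ measurable}:E\setminus\Omega=F\setminus\Omega,\ \mathcal{J}^s_\Omega(E)<\infty\}$. A measurable $E$ is a minimizer of $\mathcal{J}^s_\Omega$ (with respect to $F$) if $\mathcal{J}^s_\Omega(E)<\infty$, $E\setminus\Omega=F\setminus\Omega$, and $\mathcal{J}^s_\Omega(E)\le\mathcal{J}^s_\Omega(E')$ for all measurable $E'$ with $E'\setminus\Omega=F\setminus\Omega$. *)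

From HB Require Import structures.
From mathcomp Require Import all_boot all_order all_algebra.
From mathcomp Require Import all_classical all_reals all_analysis.
Set Implicit Arguments. Unset Strict Implicit. Unset Printing Implicit Defensive.
Import Order.TTheory GRing.Theory Num.Theory.
Local Open Scope classical_set_scope.
Local Open Scope ring_scope.

Section MMS.
Context {R : realType} {T : Type}.
Variable (dist : T -> T -> R).

Definition is_metric : Prop :=
  [/\ forall x y, 0 <= dist x y,
      forall x y, dist x y = 0 <-> x = y,
      forall x y, dist x y = dist y x &
      forall x y z, dist x z <= dist x y + dist y z].

Definition oball (x : T) (r : R) : set T := [set y | dist x y < r].

Definition dopen (U : set T) : Prop :=
  forall x, U x -> exists2 r : R, 0 < r & oball x r `<=` U.

Definition dcomplete : Prop :=
  forall u : nat -> T,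
    (forall e : R, 0 < e -> exists N, forall m n, (N <= m)%N -> (N <= n)%N ->
        dist (u m) (u n) < e) ->
    exists l : T, forall e : R, 0 < e -> exists N, forall n, (N <= n)%N ->
        dist (u n) l < e.

Definition dbounded (A : set T) : Prop :=
  exists (x : T) (r : R), A `<=` oball x r.

Definition dconnected (A : set T) : Prop :=
  forall U V : set T, dopen U -> dopen V -> U `|` V = A -> U `&` V = set0 ->
    U = set0 \/ V = set0.

Definition domain (A : set T) : Prop := dopen A /\ dconnected A.

Definition borel_set (A : set T) : Prop := <<s [set U | dopen U] >> A.
End MMS.

Section Functional.
Context {R : realType} {d : measure_display} {X : measurableType d}.
Variables (dist : X -> X -> R) (mu : {measure set X -> \bar R}).
Local Open Scope ereal_scope.

Definition doubling : Prop :=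
  exists2 C : R, (1 <= C)%R &
    forall (x : X) (r : R), (0 < r)%R ->
      [/\ 0 < mu (oball dist x (2 * r)),
          mu (oball dist x (2 * r)) <= C%:E * mu (oball dist x r) &
          mu (oball dist x r) < +oo].

Definition borel_regular : Prop :=
  (forall U : set X, dopen dist U -> measurable U) /\
  (forall A : set X, measurable A ->
     exists2 B : set X, borel_set dist B & A `<=` B /\ mu B = mu A).

(* The ball measures are finite for x <> y under doubling; the diagonal
   (where the formula is 2/0) is never met since L_s is only used on
   disjoint pairs of sets. *)
Definition Ks (s : R) (x y : X) : \bar R :=
  ((2 : R) / ((dist x y) `^ s *
     fine (mu (oball dist x (dist x y)) + mu (oball dist y (dist x y)))))%:E.

Definition Ls (s : R) (A B : set X) : \bar R :=
  \int[mu]_(x in A) \int[mu]_(y in B) Ks s x y.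

Definition Js (s : R) (Omega E : set X) : \bar R :=
  Ls s (E `&` Omega) (~` E) + Ls s (E `\` Omega) (Omega `\` E).

Definition admissible (s : R) (Omega F : set X) : set (set X) :=
  [set E | measurable E /\ E `\` Omega = F `\` Omega /\ Js s Omega E < +oo].

Definition is_minimizer (s : R) (Omega F E : set X) : Prop :=
  [/\ measurable E, Js s Omega E < +oo, E `\` Omega = F `\` Omega &
      forall E' : set X, measurable E' -> E' `\` Omega = F `\` Omega ->
        Js s Omega E <= Js s Omega E'].
End Functional.

(* For measurable E, J_Omega(E) is the integral of the
   nonnegative kernel K_s over the set of "cut pairs" of E with respect to the
   product measure mu x mu (Tonelli; the joint measurability of K_s rests on
   the separability of doubling metric spaces).  Such a functional is
   submodular, J(A u B) + J(A n B) <= J(A) + J(B), and, by monotone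
   convergence, lower semicontinuous along sequences of sets that converge
   pointwise.  Let m be the infimum of J over the competitors and E_j
   competitors with J(E_j) <= m + 2^-j.  As J(A u B) >= m, submodularity gives
   J(A n B) <= m + (J(A) - m) + (J(B) - m), hence
   J(E_k n ... n E_(k+n)) <= m + 2^(1-k); lower semicontinuity carries this
   bound to the intersection of the E_(k+n) over n and then to
   liminf E_j, which is thus a minimizer.  No compactness argument is needed. *)

From HB Require Import structures.
From mathcomp Require Import all_boot all_order all_algebra.
From mathcomp Require Import all_classical all_reals all_analysis.
From mathcomp Require Import lra measurable_realfun.
Import Order.TTheory GRing.Theory Num.Theory.
Local Open Scope classical_set_scope.
Local Open Scope ring_scope.
Set Implicit Arguments. Unset Strict Implicit. Unset Printing Implicit Defensive.

Lemma exists_natSinv_lt (R : realType) (e : R) :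
  0 < e -> exists j : nat, j.+1%:R^-1 < e.
Proof.
move=> e0; have [N _ hN] := near_infty_natSinv_lt (PosNum e0).
by exists N; apply: hN => /=.
Qed.

Lemma natSinv_gt0 (R : realType) (n : nat) : 0 < n.+1%:R^-1 :> R.
Proof. by rewrite invr_gt0 ltr0Sn. Qed.

Lemma exists_inv_exp2_lt (R : realType) (e : R) :
  0 < e -> exists j : nat, 2 ^- j < e.
Proof.
move=> e0; have [N _ hN] := near_infty_natSinv_expn_lt (PosNum e0).
by exists N; rewrite -[_ ^- N]mul1r; apply: hN => /=.
Qed.

Section SubmodularMinimization.
Context {R : realType} {T : Type}.
Variables (cls : set (set T)) (Phi : set T -> \bar R).
Local Open Scope ereal_scope.

Hypothesis clsU : forall A B, cls A -> cls B -> cls (A `|` B).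
Hypothesis clsI : forall A B, cls A -> cls B -> cls (A `&` B).
Hypothesis cls_bigcap :
  forall E : (set T)^nat, (forall n, cls (E n)) -> cls (\bigcap_n E n).
Hypothesis cls_bigcup :
  forall E : (set T)^nat, (forall n, cls (E n)) -> cls (\bigcup_n E n).
Hypothesis Phi_submod : forall A B, cls A -> cls B ->
  Phi (A `|` B) + Phi (A `&` B) <= Phi A + Phi B.
Hypothesis Phi_lsc : forall (E : (set T)^nat) H c,
  (forall n, cls (E n)) -> cls H ->
  (forall x, H x -> exists N, forall n, (N <= n)%N -> E n x) ->
  (forall x, ~ H x -> exists N, forall n, (N <= n)%N -> ~ E n x) ->
  (forall n, Phi (E n) <= c) -> Phi H <= c.

Section NearMinimizers.
Variable m : R.
Hypothesis m_lb : forall E, cls E -> m%:E <= Phi E.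

Lemma Phi_setI_le A B a b : cls A -> cls B ->
  Phi A <= (m + a)%:E -> Phi B <= (m + b)%:E -> Phi (A `&` B) <= (m + (a + b))%:E.
Proof.
move=> cA cB PA PB.
have : m%:E + Phi (A `&` B) <= (m + a)%:E + (m + b)%:E.
  apply: le_trans (leeD (m_lb (clsU cA cB)) (lexx _)) _.
  by apply: le_trans (Phi_submod cA cB) _; exact: leeD.
have := m_lb (clsI cA cB); case: (Phi (A `&` B)) => [r||] //=.
by rewrite -!EFinD !lee_fin => ? ?; lra.
Qed.

Variable E : (set T)^nat.
Hypothesis E_cls : forall j, cls (E j).
Hypothesis E_near : forall j, Phi (E j) <= (m + 2 ^- j)%:E.

Fixpoint meet_from (k n : nat) : set T :=
  if n is n'.+1 then meet_from k n' `&` E (k + n)%N else E k.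

Lemma meet_from_cls k n : cls (meet_from k n).
Proof. by elim: n => [|n IH] /=; [exact: E_cls|exact: clsI]. Qed.

Lemma Phi_meet_from_le k n :
  Phi (meet_from k n) <= (m + (2 * 2 ^- k - 2 ^- (k + n)%N))%:E.
Proof.
elim: n => [|n IH] /=.
  by rewrite addn0; apply: le_trans (E_near k) _; rewrite lee_fin; lra.
apply: le_trans (Phi_setI_le (meet_from_cls k n) (E_cls _) IH (E_near _)) _.
rewrite lee_fin lerD2l addnS exprS invfM.
set u := 2 ^- (k + n)%N; lra.
Qed.

Lemma meet_from_sub k i n : (i <= n)%N -> meet_from k n `<=` E (k + i)%N.
Proof.
elim: n => [|n IH]; first by rewrite leqn0 => /eqP -> /=; rewrite addn0.
rewrite leq_eqVlt => /orP[/eqP -> /= x []//|].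
by rewrite ltnS => /IH sub x /= [/sub].
Qed.

Definition tail_meet (k : nat) : set T := \bigcap_n E (k + n)%N.

Lemma tail_meet_cls k : cls (tail_meet k).
Proof. exact: cls_bigcap. Qed.

Lemma Phi_tail_meet_le k : Phi (tail_meet k) <= (m + 2 * 2 ^- k)%:E.
Proof.
apply: (Phi_lsc (meet_from_cls k) (tail_meet_cls k)).
- move=> x Tx; exists 0%N => n _; elim: n => [|n IH] /=.
    by have := Tx 0%N I; rewrite addn0.
  by split => //; exact: Tx.
- move=> y Ty; have [i Eyi] : exists i, ~ E (k + i)%N y.
    by apply: contrapT => /forallNP Ey; apply: Ty => i _; exact: contrapT (Ey i).
  by exists i => n ni /(meet_from_sub ni).
- move=> n; apply: le_trans (Phi_meet_from_le k n) _.
  by rewrite lee_fin lerD2l gerBl.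
Qed.

Lemma tail_meet_homo k k' : (k <= k')%N -> tail_meet k `<=` tail_meet k'.
Proof. by move=> kk' x Tx n _; rewrite -(subnKC kk') -addnA; exact: Tx. Qed.

Definition liminf_set : set T := \bigcup_k tail_meet k.

Lemma liminf_set_cls : cls liminf_set.
Proof. exact/cls_bigcup/tail_meet_cls. Qed.

Lemma Phi_liminf_set_le : Phi liminf_set <= m%:E.
Proof.
have le_j j : Phi liminf_set <= (m + 2 * 2 ^- j)%:E.
  apply: (Phi_lsc (fun n => tail_meet_cls (j + n)) liminf_set_cls).
  - move=> x [k _ Tx]; exists k => n kn; apply: tail_meet_homo Tx.
    exact: leq_trans kn (leq_addl j n).
  - by move=> y Ly; exists 0%N => n _ Ty; apply: Ly; exists (j + n)%N.
  - move=> n; apply: le_trans (Phi_tail_meet_le _) _.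
    rewrite lee_fin lerD2l ler_pM2l // lef_pV2 ?posrE ?exprn_gt0 //.
    by rewrite ler_eXn2l ?ltr1n // leq_addr.
have Lfin : Phi liminf_set \is a fin_num.
  by rewrite fin_numElt (lt_le_trans _ (m_lb liminf_set_cls)) ?ltNyr //=
    (le_lt_trans (le_j 0%N)) ?ltry.
rewrite -(fineK Lfin) lee_fin; apply/ler_addgt0Pr => e e0.
have [j je] := exists_inv_exp2_lt (divr_gt0 e0 (ltr0Sn R 1)).
have := le_j j; rewrite -(fineK Lfin) lee_fin; lra.
Qed.

End NearMinimizers.

Hypothesis Phi_ge0 : forall E, 0 <= Phi E.

Theorem exists_submodular_minimizer E0 : cls E0 -> Phi E0 < +oo ->
  exists2 G, cls G & forall E, cls E -> Phi G <= Phi E.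
Proof.
move=> cE0 E0fin.
pose m := ereal_inf [set Phi E | E in cls].
have m_lb E : cls E -> m <= Phi E by move=> cE; apply: ereal_inf_lbound; exists E.
have mfin : m \is a fin_num.
  rewrite ge0_fin_numE ?(le_lt_trans (m_lb _ cE0)) //.
  by apply: le_ereal_inf_tmp => _ [E _ <-].
have mE : m = (fine m)%:E by rewrite fineK.
have near_min j : exists E, cls E /\ Phi E <= (fine m + 2 ^- j)%:E.
  have /ereal_inf_lt[_ [E cE <-] lt] : m < (fine m + 2 ^- j)%:E.
    by rewrite [X in X < _]mE lte_fin ltrDl invr_gt0 exprn_gt0.
  by exists E; split => //; exact: ltW.
have [E /all_and2[E_cls E_near]] := choice near_min.
have fine_m_lb F : cls F -> (fine m)%:E <= Phi F by rewrite -mE; exact: m_lb.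
exists (liminf_set E); first exact: liminf_set_cls.
move=> F cF; apply: le_trans (Phi_liminf_set_le fine_m_lb E_cls E_near) _.
exact: fine_m_lb.
Qed.

End SubmodularMinimization.

Lemma measurable_inv (R : realType) : measurable_fun [set: R] GRing.inv.
Proof.
have -> : [set: R] = [set x : R | x != 0] `|` [set 0].
  by apply/seteqP; split=> // x _; case: (eqVneq x 0) => h; [right|left].
have mN0 : measurable [set x : R | x != 0] by apply: open_measurable; exact: open_neq.
apply/(measurable_funU _ mN0 (measurable_set1 0)); split.
- apply: open_continuous_measurable_fun; first exact: open_neq.
  by move=> x; rewrite inE; exact: inv_continuous.
- exact: measurable_fun_set1.
Qed.

Section MetricSpace.
Context {R : realType} {T : Type}.
Variable dist : T -> T -> R.
Hypothesis metric : is_metric dist.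

Lemma dist_ge0 x y : 0 <= dist x y. Proof. by case: metric. Qed.
Lemma distC x y : dist x y = dist y x. Proof. by case: metric. Qed.
Lemma dist_triangle x y z : dist x z <= dist x y + dist y z.
Proof. by case: metric. Qed.

Lemma le_oball x r1 r2 : r1 <= r2 -> oball dist x r1 `<=` oball dist x r2.
Proof. by move=> r12 y; rewrite /oball /= => /lt_le_trans; apply. Qed.

Lemma dopen_oball x r : dopen dist (oball dist x r).
Proof.
move=> y /= xy; exists (r - dist x y); first by rewrite subr_gt0.
move=> z; rewrite /oball /= ltrBrDl => yz.
exact: le_lt_trans (dist_triangle x y z) _.
Qed.

Lemma oball_nonpos x r : r <= 0 -> oball dist x r = set0.
Proof.
move=> r0; apply/seteqP; split=> // y; rewrite /oball /=.
by rewrite ltNge (le_trans r0 (dist_ge0 _ _)).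
Qed.

End MetricSpace.

Section DoublingMeasure.
Context {R : realType} {d : measure_display} {X : measurableType d}.
Variables (dist : X -> X -> R) (mu : {measure set X -> \bar R}).
Hypothesis metric : is_metric dist.
Hypothesis dopen_measurable : forall U, dopen dist U -> measurable U.
Variable C : R.
Hypothesis C_ge1 : 1 <= C.
Hypothesis mu_doubling : forall (x : X) (r : R), 0 < r ->
  [/\ (0 < mu (oball dist x (2 * r)))%E,
      (mu (oball dist x (2 * r)) <= C%:E * mu (oball dist x r))%E &
      (mu (oball dist x r) < +oo)%E].
Local Notation B := (oball dist).

Lemma measurable_oball x r : measurable (B x r).
Proof. exact/dopen_measurable/dopen_oball. Qed.

Lemma mu_oball_lty x r : (mu (B x r) < +oo)%E.
Proof.
have [r0|r0] := leP r 0; last by case: (mu_doubling x r0).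
by rewrite oball_nonpos // measure0 ltry.
Qed.

Lemma mu_oball_fin_num x r : mu (B x r) \is a fin_num.
Proof. by rewrite ge0_fin_numE // mu_oball_lty. Qed.

Lemma mu_oball_gt0 x r : 0 < r -> (0 < mu (B x r))%E.
Proof.
move=> r0; have r20 : 0 < r / 2 by rewrite divr_gt0.
by case: (mu_doubling x r20); rewrite mulrC divfK ?pnatr_eq0.
Qed.

Lemma mu_oball_expn_le x r n : 0 < r ->
  (mu (B x (2 ^+ n * r)) <= (C ^+ n)%:E * mu (B x r))%E.
Proof.
move=> r0; elim: n => [|n IH]; first by rewrite !expr0 mul1r mul1e.
have [_ dbl _] := mu_doubling x (mulr_gt0 (exprn_gt0 n (ltr0Sn R 1)) r0).
rewrite exprS -mulrA (le_trans dbl) // exprS EFinM -muleA lee_pmul2l //.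
by rewrite lte_fin (lt_le_trans ltr01 C_ge1).
Qed.

Variable x0 : X.

Lemma sigma_finite_doubling : sigma_finite setT mu.
Proof.
exists (fun n => B x0 n.+1%:R).
  apply/seteqP; split=> // y _; exists (Num.bound (dist x0 y)) => //=.
  by rewrite /oball /= (lt_le_trans (archi_boundP (dist_ge0 metric _ _))) // ler_nat.
by move=> n; split; [exact: measurable_oball|exact: mu_oball_lty].
Qed.

(* [B x0 R0] lies in [B p (2^n r)] as soon as [2^n r >= 2 R0], so [n]
   doublings bound [mu (B p r)] from below uniformly in [p]. *)
Lemma mu_oball_unif_lb r R0 : 0 < r -> 0 < R0 ->
  exists2 c : R, 0 < c & forall p, dist x0 p < R0 -> (c%:E <= mu (B p r))%E.
Proof.
move=> r0 R00; set n := Num.bound (2 * R0 / r).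
have Cn0 : 0 < C ^+ n by rewrite exprn_gt0 // (lt_le_trans ltr01 C_ge1).
have Rn : 2 * R0 <= 2 ^+ n * r.
  rewrite -ler_pdivrMr //; apply: le_trans (ltW (archi_boundP _)) _.
    by rewrite divr_ge0 // ?mulr_ge0 // ltW.
  by rewrite -natrX ler_nat ltnW // ltn_expl.
exists (fine (mu (B x0 R0)) / C ^+ n).
  by rewrite divr_gt0 // fine_gt0 // mu_oball_gt0 // mu_oball_lty.
move=> p p0; rewrite EFinM lee_pdivrMr // fineK ?mu_oball_fin_num // muleC.
apply: le_trans (mu_oball_expn_le _ _ r0).
apply: le_measure; rewrite ?inE; [exact: measurable_oball|exact: measurable_oball|].
move=> y; rewrite /oball /= => y0.
rewrite (le_lt_trans (dist_triangle metric p x0 y)) //.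
by rewrite (lt_le_trans _ Rn) // (distC metric p x0); lra.
Qed.

Definition separated (r : R) (s : seq X) := pairwise (fun p q => r <= dist p q) s.

Lemma oball_half_disjoint r p s : all (fun q => r <= dist p q) s ->
  B p (r / 2) `&` \big[setU/set0]_(q <- s) B q (r / 2) = set0.
Proof.
elim: s => [|q s IH] /=; first by rewrite big_nil setI0.
move=> /andP[pq ps]; rewrite big_cons setIUr IH // setU0.
apply/seteqP; split=> // y []; rewrite /oball /= => py qy.
suff : dist p q < r by rewrite ltNge pq.
rewrite (le_lt_trans (dist_triangle metric p y q)) // (distC metric y q).
by rewrite [ltRHS]splitr ltrD.
Qed.

Lemma mu_separated_oball_ge r c s : separated r s ->
  (forall p, p \in s -> (c%:E <= mu (B p (r / 2)))%E) ->
  (((size s)%:R * c)%:E <= mu (\big[setU/set0]_(p <- s) B p (r / 2)))%E.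
Proof.
elim: s => [|p s IH] /=; first by rewrite big_nil mul0r measure0.
move=> /andP[ps sep_s] c_le.
have mU : measurable (\big[setU/set0]_(q <- s) B q (r / 2)).
  by apply: bigsetU_measurable => q _; exact: measurable_oball.
rewrite big_cons measureU ?oball_half_disjoint //; last exact: measurable_oball.
rewrite -add1n natrD mulrDl mul1r EFinD leeD ?c_le ?mem_head //.
by apply: IH => // q qs; rewrite c_le // in_cons qs orbT.
Qed.

Lemma bigsetU_oball_sub r R0 s : all (fun p => dist x0 p < R0) s ->
  \big[setU/set0]_(p <- s) B p r `<=` B x0 (R0 + r).
Proof.
elim: s => [|p s IH] /=; first by rewrite big_nil => y.
move=> /andP[p0 s_in]; rewrite big_cons => y [|/(IH s_in)//].
rewrite /oball /= => py; rewrite (le_lt_trans (dist_triangle metric x0 p y)) //.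
exact: ltrD.
Qed.

Lemma separated_size_bound r R0 : 0 < r -> 0 < R0 -> exists N : nat, forall s,
  separated r s -> all (fun p => dist x0 p < R0) s -> (size s <= N)%N.
Proof.
move=> r0 R00; have [c c0 c_le] := mu_oball_unif_lb (divr_gt0 r0 (ltr0Sn R 1)) R00.
set M := fine (mu (B x0 (R0 + r))).
exists (Num.bound (M / c)) => s sep_s s_in.
have : (((size s)%:R * c)%:E <= M%:E)%E.
  rewrite fineK ?mu_oball_fin_num //.
  apply: le_trans (mu_separated_oball_ge sep_s _) _.
    by move=> p /(allP s_in); exact: c_le.
  apply: le_measure; rewrite ?inE; [|exact: measurable_oball|].
    by apply: bigsetU_measurable => q _; exact: measurable_oball.
  by apply: subset_trans (bigsetU_oball_sub s_in) _; apply: le_oball; lra.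
rewrite lee_fin -ler_pdivlMr // => sM.
rewrite -ltnS -(ltr_nat R) (le_lt_trans sM) //.
rewrite (lt_le_trans (archi_boundP _)) ?ler_nat //.
exact: divr_ge0 (fine_ge0 (measure_ge0 _ _)) (ltW c0).
Qed.

(* A maximal [r]-separated sequence of points of [B x0 R0] is an [r]-net. *)
Lemma exists_finite_net r R0 : 0 < r -> 0 < R0 -> exists s : seq X,
  forall x, dist x0 x < R0 -> has (fun p => dist x p < r) s.
Proof.
move=> r0 R00; have [N sizeN] := separated_size_bound r0 R00.
pose P m := `[< exists s, [/\ separated r s, all (fun p => dist x0 p < R0) s
                             & size s = m] >].
have P0 : exists m, P m by exists 0%N; apply/asboolP; exists [::].
have P_le m : P m -> (m <= N)%N by move=> /asboolP[s [sep_s s_in <-]]; exact: sizeN.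
have [m /asboolP[s [sep_s s_in <-]] Pmax] := ex_maxnP P0 P_le.
exists s => x x0x; apply: contraT => /hasPn far.
suff /Pmax : P (size s).+1 by rewrite ltnn.
apply/asboolP; exists (x :: s); split => //=; last by rewrite x0x.
apply/andP; split => //; apply/allP => p /far.
by rewrite -leNgt distC.
Qed.

Lemma exists_dense_seq : exists q : nat -> X,
  forall x e, 0 < e -> exists n, dist x (q n) < e.
Proof.
have nets (ab : nat * nat) : exists s : seq X,
    forall x, dist x0 x < ab.2.+1%:R -> has (fun p => dist x p < ab.1.+1%:R^-1) s.
  exact: exists_finite_net (natSinv_gt0 _ _) (ltr0Sn _ _).
have [net netP] := choice nets.
(* [n] codes the [i]-th point of the [a.+1^-1]-net of [B x0 b.+1]. *)
exists (fun n => if unpickle n is Some (a, b, i) then nth x0 (net (a, b)) i else x0).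
move=> x e e0; have [a ae] := exists_natSinv_lt e0.
have x0x : dist x0 x < (Num.bound (dist x0 x)).+1%:R.
  by rewrite (lt_le_trans (archi_boundP (dist_ge0 metric _ _))) // ler_nat.
have /(has_nthP x0)[i _ xi] := netP (a, _) x x0x.
by exists (pickle (a, Num.bound (dist x0 x), i)); rewrite pickleK; exact: lt_trans ae.
Qed.

(* Separability is what puts the open sets of [X * X] in the product
   sigma-algebra. *)
Lemma measurable_dist : measurable_fun setT (fun z : X * X => dist z.1 z.2).
Proof.
have [q qP] := exists_dense_seq.
apply: (measurability _ (RGenInftyO.measurableE R)) => //.
move=> _ [_ [t ->] <-]; rewrite setTI.
rewrite (_ : _ @^-1` _ = \bigcup_n \bigcup_j
    (B (q n) j.+1%:R^-1 `*` B (q n) (t - j.+1%:R^-1))).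
  apply: bigcupT_measurable => n; apply: bigcupT_measurable => j.
  by apply: measurableX; exact: measurable_oball.
apply/seteqP; split => [[x y]|[x y]]; rewrite /= in_itv /=.
- move=> xy; have [j je] : exists j, j.+1%:R^-1 < (t - dist x y) / 2.
    by apply: exists_natSinv_lt; rewrite divr_gt0 // subr_gt0.
  have [n xn] := qP x _ (natSinv_gt0 _ j).
  exists n => //; exists j => //; split; rewrite /oball /=; first by rewrite distC.
  rewrite (le_lt_trans (dist_triangle metric _ x _)) // (distC metric (q n) x).
  by move: xn je; set e := j.+1%:R^-1; lra.
- move=> [n _ [j _ []]]; rewrite /oball /= => xn yn.
  rewrite (le_lt_trans (dist_triangle metric _ (q n) _)) // (distC metric x (q n)).
  by move: xn yn; set e := j.+1%:R^-1; lra.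
Qed.

Lemma mu_oball_shrink_gt x r (t : \bar R) : (t < mu (B x r))%E ->
  exists n : nat, (t < mu (B x (r - n.+1%:R^-1)))%E.
Proof.
move=> tr; apply: contrapT => /forallNP small.
pose Bn n := B x (r - n.+1%:R^-1).
have UBn : \bigcup_n Bn n = B x r.
  apply/seteqP; split => [y [n _]|y].
    by apply: le_oball; rewrite gerDl oppr_le0 ltW ?natSinv_gt0.
  rewrite /oball /= => xy; have [n rn] : exists n : nat, n.+1%:R^-1 < r - dist x y.
    by apply: exists_natSinv_lt; rewrite subr_gt0.
  by exists n => //; rewrite /Bn /oball /=; move: rn; set e := n.+1%:R^-1; lra.
have : (mu \o Bn) @ \oo --> mu (B x r).
  rewrite -UBn; apply: nondecreasing_cvg_mu => [n||]; try exact: measurable_oball.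
    by rewrite UBn; exact: measurable_oball.
  apply/nondecreasing_seqP => n; rewrite subsetEset; apply: le_oball.
  by rewrite lerD2l lerN2 lef_pV2 ?posrE ?ltr0Sn // ler_nat.
move=> cvg_Bn; suff : (mu (B x r) <= t)%E by rewrite leNgt tr.
by apply: (cvge_to_le cvg_Bn); apply: nearW => n; rewrite leNgt; apply/negP/small.
Qed.

Lemma dopen_mu_oball_gt (t : \bar R) r : dopen dist [set x | (t < mu (B x r))%E].
Proof.
move=> x /= /mu_oball_shrink_gt[n tn]; exists n.+1%:R^-1; first exact: natSinv_gt0.
move=> y; rewrite /oball /= => xy; apply: (lt_le_trans tn); apply: le_measure.
- by rewrite inE; exact: measurable_oball.
- by rewrite inE; exact: measurable_oball.
move=> w; rewrite /oball /= => xw.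
rewrite (le_lt_trans (dist_triangle metric y x w)) // (distC metric y x).
by move: xw xy; set e := n.+1%:R^-1; lra.
Qed.

Lemma measurable_mu_oball_dist :
  measurable_fun setT (fun z : X * X => mu (B z.1 (dist z.1 z.2))).
Proof.
apply: (measurability _ (ErealGenOInfty.measurableE R)) => //.
move=> _ [_ [t ->] <-]; rewrite setTI.
rewrite (_ : _ @^-1` _ = \bigcup_(q : rat)
    ([set z | ratr q < dist z.1 z.2] `&`
     [set x | (t%:E < mu (B x (ratr q)))%E] `*` setT)).
  apply: bigcupT_measurable_rat => q; apply: measurableI.
    rewrite (_ : [set z | _] = (fun z : X * X => dist z.1 z.2) @^-1` `]ratr q, +oo[).
      by rewrite -[X in measurable X]setTI; exact: measurable_dist.
    by apply/seteqP; split=> z /=; rewrite in_itv /= andbT.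
  by apply: measurableX => //; exact/dopen_measurable/dopen_mu_oball_gt.
apply/seteqP; split => [[x y]|[x y]]; rewrite /= in_itv /= andbT.
- move=> /mu_oball_shrink_gt[n tn].
  have : dist x y - n.+1%:R^-1 < dist x y by rewrite gtrDl oppr_lt0 natSinv_gt0.
  move=> /rat_in_itvoo[q]; rewrite in_itv /= => /andP[nq qxy].
  exists q => //; split => //=; split => //=; apply: (lt_le_trans tn).
  apply: le_measure; rewrite ?inE; try exact: measurable_oball.
  exact/le_oball/ltW.
- move=> [q _ [/= qxy [/= tq _]]]; apply: (lt_le_trans tq).
  apply: le_measure; rewrite ?inE; try exact: measurable_oball.
  exact/le_oball/ltW.
Qed.

Variable s : R.

Lemma measurable_Ks : measurable_fun setT (fun z : X * X => Ks dist mu s z.1 z.2).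
Proof.
have mu_oball_swap : (fun z : X * X => mu (B z.2 (dist z.1 z.2))) =
    (fun z : X * X => mu (B z.1 (dist z.1 z.2))) \o unstable.swap.
  by apply/funext => -[x y]; rewrite /= (distC metric x y).
apply/measurable_EFinP; apply: measurable_funM => //.
apply: (measurableT_comp (@measurable_inv R)); apply: measurable_funM.
  exact: (measurableT_comp (measurable_powR s) measurable_dist).
apply: (measurableT_comp (fine_measurable measurableT)).
apply: emeasurable_funD; first exact: measurable_mu_oball_dist.
rewrite mu_oball_swap; apply: measurableT_comp measurable_mu_oball_dist _.
exact: measurable_swap.
Qed.

End DoublingMeasure.

Section IntegralInclExcl.
Context {R : realType} {d : measure_display} {T : measurableType d}.
Variables (mu : {measure set T -> \bar R}) (f : T -> \bar R).
Hypothesis measurable_f : measurable_fun setT f.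
Hypothesis f_ge0 : forall x, (0 <= f x)%E.
Local Open Scope ereal_scope.

Lemma ge0_integral_setUI (A B : set T) : measurable A -> measurable B ->
  \int[mu]_(x in A) f x + \int[mu]_(x in B) f x =
  \int[mu]_(x in A `|` B) f x + \int[mu]_(x in A `&` B) f x.
Proof.
move=> mA mB; have mBA : measurable (B `\` A) by exact: measurableD.
have intU (S U : set T) : measurable S -> measurable U -> S `&` U = set0 ->
    \int[mu]_(x in S `|` U) f x = \int[mu]_(x in S) f x + \int[mu]_(x in U) f x.
  move=> mS mU SU; apply: ge0_integral_setU; rewrite ?disj_set2E ?SU //.
  exact: measurable_funS measurable_f.
have UE : A `|` B = A `|` (B `\` A).
  by apply/seteqP; split=> x /=; case: (pselect (A x)); tauto.
have disjBA : (B `&` A) `&` (B `\` A) = set0.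
  by apply/seteqP; split=> // x /= [[_ ?] [_ ?]].
rewrite -[in LHS](setUIDK B A) UE !intU ?setDIK //; last exact: measurableI.
by rewrite [B `&` A]setIC addeA addeAC.
Qed.

End IntegralInclExcl.

Section CutFunctional.
Context {R : realType} {d : measure_display} {X : measurableType d}.
Variables (P : {measure set (X * X) -> \bar R}) (k : X * X -> \bar R).
Variable Omega : set X.
Hypothesis measurable_k : measurable_fun setT k.
Hypothesis k_ge0 : forall z, (0 <= k z)%E.
Hypothesis measurable_Omega : measurable Omega.
Local Open Scope ereal_scope.

Definition cut_pairs (E : set X) : set (X * X) :=
  (E `&` Omega) `*` ~` E `|` (E `\` Omega) `*` (Omega `\` E).

Definition cut (E : set X) : \bar R := \int[P]_(z in cut_pairs E) k z.

Lemma measurable_cut_pairs E : measurable E -> measurable (cut_pairs E).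
Proof.
move=> mE; apply: measurableU; apply: measurableX; do ?[exact: measurableI].
- exact: measurableC.
- exact: measurableD.
- exact: measurableD.
Qed.

Lemma subset_integral_kernel S U : measurable S -> measurable U -> S `<=` U ->
  \int[P]_(z in S) k z <= \int[P]_(z in U) k z.
Proof.
move=> mS mU SU; apply: ge0_subset_integral => //.
exact: measurable_funS measurable_k.
Qed.

Lemma cut_pairsUI_subU A B :
  cut_pairs (A `|` B) `|` cut_pairs (A `&` B) `<=` cut_pairs A `|` cut_pairs B.
Proof.
move=> [x y]; rewrite /cut_pairs /=.
by case: (pselect (A x)); case: (pselect (B x)); case: (pselect (A y));
  case: (pselect (B y)); tauto.
Qed.

Lemma cut_pairsUI_subI A B :
  cut_pairs (A `|` B) `&` cut_pairs (A `&` B) `<=` cut_pairs A `&` cut_pairs B.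
Proof.
move=> [x y]; rewrite /cut_pairs /=.
by case: (pselect (A x)); case: (pselect (B x)); case: (pselect (A y));
  case: (pselect (B y)); tauto.
Qed.

Lemma cut_submod A B : measurable A -> measurable B ->
  cut (A `|` B) + cut (A `&` B) <= cut A + cut B.
Proof.
move=> mA mB; have [mWA mWB] := (measurable_cut_pairs mA, measurable_cut_pairs mB).
have mWU := measurable_cut_pairs (measurableU _ _ mA mB).
have mWI := measurable_cut_pairs (measurableI _ _ mA mB).
rewrite /cut ge0_integral_setUI // [X in _ <= X]ge0_integral_setUI //.
apply: leeD; apply: subset_integral_kernel; do ?[exact: measurableU|exact: measurableI].
- exact: cut_pairsUI_subU.
- exact: cut_pairsUI_subI.
Qed.

Lemma cut_pairs_sub_liminf (G : (set X)^nat) H :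
  (forall x, H x -> exists N, forall n, (N <= n)%N -> G n x) ->
  (forall x, ~ H x -> exists N, forall n, (N <= n)%N -> ~ G n x) ->
  cut_pairs H `<=` \bigcup_N \bigcap_n cut_pairs (G (N + n)%N).
Proof.
move=> Hin Hout [x y] Wxy; have [Hx Hy] : H x /\ ~ H y.
  by case: Wxy => /= [[[? _] ?]|[[? _] [_ ?]]].
have [N1 GN1] := Hin x Hx; have [N2 GN2] := Hout y Hy.
exists (maxn N1 N2) => // n _.
have Gx : G (maxn N1 N2 + n)%N x.
  by apply: GN1; exact: leq_trans (leq_maxl N1 N2) (leq_addr _ _).
have Gy : ~ G (maxn N1 N2 + n)%N y.
  by apply: GN2; exact: leq_trans (leq_maxr N1 N2) (leq_addr _ _).
by case: Wxy => /= [[[_ ?] _]|[[_ ?] [? _]]]; [left|right].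
Qed.

Lemma cut_lsc (G : (set X)^nat) H c :
  (forall n, measurable (G n)) -> measurable H ->
  (forall x, H x -> exists N, forall n, (N <= n)%N -> G n x) ->
  (forall x, ~ H x -> exists N, forall n, (N <= n)%N -> ~ G n x) ->
  (forall n, cut (G n) <= c) -> cut H <= c.
Proof.
move=> mG mH Hin Hout Gc.
pose I N := \bigcap_n cut_pairs (G (N + n)%N).
have mI N : measurable (I N).
  by apply: bigcapT_measurable => n; exact: measurable_cut_pairs.
have ndI : nondecreasing_seq I.
  apply/nondecreasing_seqP => N; rewrite subsetEset => z Iz n _.
  by rewrite addSnnS; exact: Iz.
have mUI : measurable (\bigcup_N I N) by exact: bigcupT_measurable.
rewrite /cut; apply: le_trans (subset_integral_kernel (measurable_cut_pairs mH)
  mUI (cut_pairs_sub_liminf Hin Hout)) _.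
have : (fun N => \int[P]_(z in I N) k z) @ \oo --> \int[P]_(z in \bigcup_N I N) k z.
  apply: ge0_nondecreasing_set_cvg_integral => // n.
  exact: measurable_funS measurable_k.
move/cvge_to_le; apply; apply: nearW => N; apply: le_trans (Gc N).
apply: subset_integral_kernel => //; first exact: measurable_cut_pairs.
by move=> z Iz; rewrite -[N]addn0; exact: Iz.
Qed.

End CutFunctional.

Section FixedOutside.
Context {d : measure_display} {X : measurableType d}.
Variables (Omega F : set X).

Definition fixed_outside : set (set X) :=
  [set E | measurable E /\ E `\` Omega = F `\` Omega].

Lemma fixed_outsideP A : measurable A ->
  fixed_outside A <-> forall x, ~ Omega x -> A x <-> F x.
Proof.
move=> mA; split => [[_ AO] x Ox|AF].
  by move/seteqP: AO => [AF FA]; split => [Ax|Fx]; [case: (AF x)|case: (FA x)].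
by split => //; apply/seteqP; split => x [? Ox]; split => //; apply/(AF x Ox).
Qed.

Lemma fixed_outsideU A B :
  fixed_outside A -> fixed_outside B -> fixed_outside (A `|` B).
Proof.
move=> cA cB; have [mA mB] := (cA.1, cB.1).
apply/fixed_outsideP; first exact: measurableU.
have [AF BF] := ((fixed_outsideP mA).1 cA, (fixed_outsideP mB).1 cB).
move=> x Ox.
by have := AF x Ox; have := BF x Ox; rewrite /setU /=; tauto.
Qed.

Lemma fixed_outsideI A B :
  fixed_outside A -> fixed_outside B -> fixed_outside (A `&` B).
Proof.
move=> cA cB; have [mA mB] := (cA.1, cB.1).
apply/fixed_outsideP; first exact: measurableI.
have [AF BF] := ((fixed_outsideP mA).1 cA, (fixed_outsideP mB).1 cB).
move=> x Ox.
by have := AF x Ox; have := BF x Ox; rewrite /setI /=; tauto.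
Qed.

Lemma fixed_outside_bigcap (E : (set X)^nat) :
  (forall n, fixed_outside (E n)) -> fixed_outside (\bigcap_n E n).
Proof.
move=> cE; have mE n := (cE n).1.
have EF n := (fixed_outsideP (mE n)).1 (cE n).
apply/fixed_outsideP; first exact: bigcapT_measurable.
move=> x Ox; split => [Ex|Fx n _]; first exact/(EF 0%N x Ox)/Ex.
exact/(EF n x Ox).
Qed.

Lemma fixed_outside_bigcup (E : (set X)^nat) :
  (forall n, fixed_outside (E n)) -> fixed_outside (\bigcup_n E n).
Proof.
move=> cE; have mE n := (cE n).1.
have EF n := (fixed_outsideP (mE n)).1 (cE n).
apply/fixed_outsideP; first exact: bigcupT_measurable.
move=> x Ox; split => [[n _ Enx]|Fx]; first exact/(EF n x Ox).
by exists 0%N => //; apply/(EF 0%N x Ox).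
Qed.

End FixedOutside.

Section NonlocalPerimeter.
Context {R : realType} {d : measure_display} {X : measurableType d}.
Variables (dist : X -> X -> R) (mu : {measure set X -> \bar R}).
Hypothesis metric : is_metric dist.
Hypothesis dopen_measurable : forall U, dopen dist U -> measurable U.
Variable C : R.
Hypothesis C_ge1 : 1 <= C.
Hypothesis mu_doubling : forall (x : X) (r : R), 0 < r ->
  [/\ (0 < mu (oball dist x (2 * r)))%E,
      (mu (oball dist x (2 * r)) <= C%:E * mu (oball dist x r))%E &
      (mu (oball dist x r) < +oo)%E].
Variables (x0 : X) (s : R).
Local Open Scope ereal_scope.

(* A copy of [mu] carrying the sigma-finiteness needed by Fubini-Tonelli. *)
Definition mu_sf : set X -> \bar R := mu.
HB.instance Definition _ := Measure.on mu_sf.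
HB.instance Definition _ := @Measure_isSigmaFinite.Build _ _ _ mu_sf
  (sigma_finite_doubling metric dopen_measurable mu_doubling x0).

Local Notation K := (fun z : X * X => Ks dist mu s z.1 z.2).

Lemma Ks_ge0 x y : 0 <= Ks dist mu s x y.
Proof.
rewrite /Ks lee_fin divr_ge0 // mulr_ge0 // ?powR_ge0 //.
by apply: fine_ge0; apply: adde_ge0.
Qed.

Lemma Ls_integral_prod A B : measurable A -> measurable B ->
  Ls dist mu s A B = \int[mu_sf \x mu_sf]_(z in A `*` B) K z.
Proof.
move=> mA mB; have mK := measurable_Ks metric dopen_measurable C_ge1 mu_doubling x0 s.
rewrite integral_mkcond fubini_tonelli1; last 2 first.
- apply: (measurable_restrictT _ (measurableX mA mB)).1.
  exact: measurable_funS measurableT _ mK.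
- by move=> z; apply: erestrict_ge0 => ? _; exact: Ks_ge0.
rewrite /Ls [in LHS]integral_mkcond; apply: eq_integral => x _.
rewrite /fubini_F /patch; case: ifPn => Ax.
  by rewrite [in LHS]integral_mkcond; apply: eq_integral => y _; rewrite in_setX Ax.
rewrite (_ : (fun y => _) = fun=> 0) ?integral0 //.
by apply/funext => y; rewrite in_setX (negbTE Ax).
Qed.

Lemma Js_cut Omega E : measurable Omega -> measurable E ->
  Js dist mu s Omega E = cut (mu_sf \x mu_sf) K Omega E.
Proof.
move=> mOmega mE; rewrite /Js /cut /cut_pairs.
rewrite !Ls_integral_prod;
  do ?[exact: measurableI|exact: measurableC|exact: measurableD].
rewrite ge0_integral_setU //.
- by apply: measurableX; [exact: measurableI|exact: measurableC].
- by apply: measurableX; exact: measurableD.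
- exact: measurable_funS measurableT _
    (measurable_Ks metric dopen_measurable C_ge1 mu_doubling x0 s).
- by move=> z _; exact: Ks_ge0.
- rewrite disj_set2E; apply/eqP/seteqP; split => // -[x y].
  by move=> /= [[[_ Ox] _] [[_ nOx] _]].
Qed.

Lemma exists_Js_minimizer Omega F : measurable Omega ->
  admissible dist mu s Omega F !=set0 -> exists E, is_minimizer dist mu s Omega F E.
Proof.
move=> mOmega [E0 [mE0 [E0F E0fin]]].
have mK := measurable_Ks metric dopen_measurable C_ge1 mu_doubling x0 s.
pose Phi := cut (mu_sf \x mu_sf) K Omega.
have Phi_submod A B : fixed_outside Omega F A -> fixed_outside Omega F B ->
    Phi (A `|` B) + Phi (A `&` B) <= Phi A + Phi B.
  by move=> [mA _] [mB _]; apply: cut_submod => // z; exact: Ks_ge0.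
have Phi_lsc (E : (set X)^nat) H c : (forall n, fixed_outside Omega F (E n)) ->
    fixed_outside Omega F H ->
    (forall x, H x -> exists N, forall n, (N <= n)%N -> E n x) ->
    (forall x, ~ H x -> exists N, forall n, (N <= n)%N -> ~ E n x) ->
    (forall n, Phi (E n) <= c) -> Phi H <= c.
  move=> cE [mH _]; apply: cut_lsc => // [z|n]; first exact: Ks_ge0.
  by case: (cE n).
have Phi_ge0 E : 0 <= Phi E by apply: integral_ge0 => z _; exact: Ks_ge0.
have Phi_E0_lty : Phi E0 < +oo by rewrite /Phi -Js_cut.
have [G [mG GF] Gmin] := exists_submodular_minimizer (@fixed_outsideU _ _ Omega F)
  (@fixed_outsideI _ _ Omega F) (@fixed_outside_bigcap _ _ Omega F)
  (@fixed_outside_bigcup _ _ Omega F) Phi_submod Phi_lsc Phi_ge0 (conj mE0 E0F)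
  Phi_E0_lty.
exists G; split => //.
  by rewrite Js_cut // (le_lt_trans (Gmin _ (conj mE0 E0F))) // -Js_cut.
by move=> E mE EF; rewrite !Js_cut //; exact: Gmin.
Qed.

End NonlocalPerimeter.

Unset Implicit Arguments. Set Strict Implicit.

Theorem theorem5p3 (R : realType) (d : measure_display) (X : measurableType d)
  (dist : X -> X -> R) (mu : {measure set X -> \bar R})
  (Omega F : set X) (s : R) :
  is_metric dist -> dcomplete dist ->
  doubling dist mu -> borel_regular dist mu ->
  domain dist Omega -> dbounded dist Omega ->
  0 < s < 1 ->
  measurable F -> F `\` Omega !=set0 ->
  admissible dist mu s Omega F !=set0 ->
  exists E : set X, is_minimizer dist mu s Omega F E.
Proof.
move=> metric _ [C C_ge1 mu_doubling] [dopen_measurable _] [dopen_Omega _] _ _ _ [x0 _].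
exact: (exists_Js_minimizer metric dopen_measurable C_ge1 mu_doubling x0
  (dopen_measurable _ dopen_Omega)).
Qed.
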